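(* Let $\mathbf{r}_1,\ldots,\mathbf{r}_m$ be duplicate-free temporal-probabilistic (TP) relations and let $Q$ be a non-repeating TP set query over them, i.e., an expression generated by the grammar $Q ::= \mathbf{r}_i \mid Q \cup^{Tp} Q \mid Q \cap^{Tp} Q \mid Q -^{Tp} Q \mid (Q)$ in which every input relation $\mathbf{r}_i$ occurs at most once. Then the lineage expression of every result tuple of $Q$ is in one-occurrence form (1OF), i.e., no tuple identifier occurs more than once in it.
   Context: A TP relation $\mathbf{r}$ with schema $(F,\lambda,T,p)$ is a finite set of tuples $r$, where $r.F=(A_1,\dots,A_m)$ is a tuple of ordinary attribute values (the ''fact''), $r.\lambda$ is a lineage expression, $r.T=[T_s,T_e)$ is an interval over a finite ordered domain $\Omega^T$ of time points, and $r.p\in(0,1]$ is a probability. A lineage expression is a Boolean formula built from tuple identifiers with $\neg,\land,\lor$; for a base tuple $r$, $r.\lambda$ is the atomic formula consisting of its own identifier $r$ (identifiers are distinct across all base tuples). $\mathbf{r}$ is duplicate-free iff for all $r\neq r'$ in $\mathbf{r}$, $r.F\neq r'.F$ or $r.T\cap r'.T=\emptyset$. For a relation $\mathbf{r}$, fact $f$ and time point $t$, $\lambda^{\mathbf{r},f}_t$ denotes $r.\lambda$ if there is $r\in\mathbf{r}$ with $r.F=f$ and $t\in r.T$, and $\mathtt{null}$ otherwise. Lineage-concatenation functions: $\mathbf{and}(\lambda_1,\lambda_2)=(\lambda_1)\land(\lambda_2)$; $\mathbf{andNot}(\lambda_1,\lambda_2)=(\lambda_1)$ if $\lambda_2=\mathtt{null}$,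 else $(\lambda_1)\land\neg(\lambda_2)$; $\mathbf{or}(\lambda_1,\lambda_2)=(\lambda_1)$ if $\lambda_2=\mathtt{null}$, $(\lambda_2)$ if $\lambda_1=\mathtt{null}$, else $(\lambda_1)\lor(\lambda_2)$. TP set operations on relations $\mathbf{r},\mathbf{s}$ with the same schema (a result tuple $\tilde r$ has fact, lineage and interval; its probability is the probability of its lineage): $\tilde r\in\mathbf{r}\cup^{Tp}\mathbf{s}$ iff for all $t\in\tilde r.T$: ($\lambda^{\mathbf{r},\tilde r.F}_t\neq\mathtt{null}$ or $\lambda^{\mathbf{s},\tilde r.F}_t\neq\mathtt{null}$) and $\tilde r.\lambda\equiv\mathbf{or}(\lambda^{\mathbf{r},\tilde r.F}_t,\lambda^{\mathbf{s},\tilde r.F}_t)$; and for all $t'\notin\tilde r.T$: $\tilde r.\lambda\not\equiv\mathbf{or}(\lambda^{\mathbf{r},\tilde r.F}_{t'},\lambda^{\mathbf{s},\tilde r.F}_{t'})$. $\tilde r\in\mathbf{r}\cap^{Tp}\mathbf{s}$ iff for all $t\in\tilde r.T$: $\lambda^{\mathbf{r},\tilde r.F}_t\neq\mathtt{null}$, $\lambda^{\mathbf{s},\tilde r.F}_t\neq\mathtt{null}$ and $\tilde r.\lambda\equiv\mathbf{and}(\lambda^{\mathbf{r},\tilde r.F}_t,\lambda^{\mathbf{s},\tilde r.F}_t)$; and for all $t'\notin\tilde r.T$: $\tilde r.\lambda\not\equiv\mathbf{and}(\lambda^{\mathbf{r},\tilde r.F}_{t'},\lambda^{\mathbf{s},\tilde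 r.F}_{t'})$. $\tilde r\in\mathbf{r}-^{Tp}\mathbf{s}$ iff for all $t\in\tilde r.T$: $\lambda^{\mathbf{r},\tilde r.F}_t\neq\mathtt{null}$ and $\tilde r.\lambda\equiv\mathbf{andNot}(\lambda^{\mathbf{r},\tilde r.F}_t,\lambda^{\mathbf{s},\tilde r.F}_t)$; and for all $t'\notin\tilde r.T$: $\tilde r.\lambda\not\equiv\mathbf{andNot}(\lambda^{\mathbf{r},\tilde r.F}_{t'},\lambda^{\mathbf{s},\tilde r.F}_{t'})$. The result lineages are the formulas produced by the concatenation functions when applying the operations bottom-up in $Q$. *)

From Stdlib Require Import Reals List Arith.
Import ListNotations.

Inductive lineage : Type :=
| LId  : nat -> lineage
| LNot : lineage -> lineage
| LAnd : lineage -> lineage -> lineage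
| LOr  : lineage -> lineage -> lineage.

Fixpoint lin_ids (l : lineage) : list nat :=
  match l with
  | LId x => [x]
  | LNot a => lin_ids a
  | LAnd a b | LOr a b => lin_ids a ++ lin_ids b
  end.

Definition one_occurrence_form (l : lineage) : Prop := NoDup (lin_ids l).

Fixpoint lin_eval (v : nat -> bool) (l : lineage) : bool :=
  match l with
  | LId x => v x
  | LNot a => negb (lin_eval v a)
  | LAnd a b => andb (lin_eval v a) (lin_eval v b)
  | LOr a b => orb (lin_eval v a) (lin_eval v b)
  end.

Definition lin_equiv (a b : lineage) : Prop := forall v, lin_eval v a = lin_eval v b.

(* Time domain Omega^T = {0, ..., N-1}; intervals [ts, te) with ts < te <= N. *)

(* Base tuples: fact, own identifier (lineage = atomic identifier), interval,
   probability in (0,1]. *)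
Record base_tuple (F : Type) : Type := BaseTuple {
  b_fact : F; b_id : nat; b_ts : nat; b_te : nat; b_p : R }.
Arguments BaseTuple {F}.
Arguments b_fact {F}. Arguments b_id {F}. Arguments b_ts {F}.
Arguments b_te {F}. Arguments b_p {F}.

Definition base_relation (F : Type) := list (base_tuple F).

Definition base_tuple_wf {F} (N : nat) (b : base_tuple F) : Prop :=
  b_ts b < b_te b /\ b_te b <= N /\ (0 < b_p b)%R /\ (b_p b <= 1)%R.

Definition b_in_T {F} (t : nat) (b : base_tuple F) : Prop := b_ts b <= t < b_te b.

Definition base_duplicate_free {F} (r : base_relation F) : Prop :=
  forall i j, i < length r -> j < length r -> i <> j ->
  forall b b', nth_error r i = Some b -> nth_error r j = Some b' ->
  b_fact b <> b_fact b' \/ ~ (exists t, b_in_T t b /\ b_in_T t b').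

(* (Result) tuples: fact, lineage, interval.  Probability of a result tuple is
   the probability of its lineage and plays no role here. *)
Record tp_tuple (F : Type) : Type := TPTuple {
  fact : F; lin : lineage; ts : nat; te : nat }.
Arguments TPTuple {F}.
Arguments fact {F}. Arguments lin {F}. Arguments ts {F}. Arguments te {F}.

Definition in_T {F} (t : nat) (x : tp_tuple F) : Prop := ts x <= t < te x.

Definition tp_rel (F : Type) := tp_tuple F -> Prop.

Definition base_as_rel {F} (r : base_relation F) : tp_rel F :=
  fun x => exists b, In b r /\ fact x = b_fact b /\ lin x = LId (b_id b)
                     /\ ts x = b_ts b /\ te x = b_te b.

(* lambda^{r,f}_t = o  (o = None encodes null) *)
Definition lin_at {F} (r : tp_rel F) (f : F) (t : nat) (o : option lineage) : Prop :=
  match o with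
  | Some l => exists x, r x /\ fact x = f /\ in_T t x /\ lin x = l
  | None => ~ exists x, r x /\ fact x = f /\ in_T t x
  end.

(* Lineage concatenation functions; None = undefined / null arguments where
   the paper's function is not applicable. *)
Definition lc_or (a b : option lineage) : option lineage :=
  match a, b with
  | Some l1, None => Some l1
  | None, Some l2 => Some l2
  | Some l1, Some l2 => Some (LOr l1 l2)
  | None, None => None
  end.

Definition lc_and (a b : option lineage) : option lineage :=
  match a, b with
  | Some l1, Some l2 => Some (LAnd l1 l2)
  | _, _ => None
  end.

Definition lc_andNot (a b : option lineage) : option lineage :=
  match a, b with
  | Some l1, None => Some l1
  | Some l1, Some l2 => Some (LAnd l1 (LNot l2))
  | None, _ => None
  end.

Definition nonnull (o : option lineage) : bool :=
  match o with Some _ => true | None => false end.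

(* Generic TP set operation: nn is the non-null requirement on
   (lambda^r_t, lambda^s_t), cc the concatenation function. *)
Definition tp_setop {F} (N : nat) (nn : bool -> bool -> bool)
  (cc : option lineage -> option lineage -> option lineage)
  (r s : tp_rel F) : tp_rel F :=
  fun x =>
    ts x < te x /\ te x <= N /\
    (forall t, in_T t x ->
       exists a b, lin_at r (fact x) t a /\ lin_at s (fact x) t b /\
                   nn (nonnull a) (nonnull b) = true /\ cc a b = Some (lin x)) /\
    (forall t', t' < N -> ~ in_T t' x ->
       forall a b, lin_at r (fact x) t' a -> lin_at s (fact x) t' b ->
       forall l, cc a b = Some l -> ~ lin_equiv (lin x) l).

Definition tp_union {F} N (r s : tp_rel F) := tp_setop N orb lc_or r s.
Definition tp_inter {F} N (r s : tp_rel F) := tp_setop N andb lc_and r s.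
Definition tp_minus {F} N (r s : tp_rel F) := tp_setop N (fun a _ => a) lc_andNot r s.

Inductive query : Type :=
| QRel : nat -> query
| QUnion : query -> query -> query
| QInter : query -> query -> query
| QMinus : query -> query -> query.

Fixpoint q_rels (q : query) : list nat :=
  match q with
  | QRel i => [i]
  | QUnion a b | QInter a b | QMinus a b => q_rels a ++ q_rels b
  end.

Definition non_repeating (q : query) : Prop := NoDup (q_rels q).

Fixpoint eval_query {F} (N : nat) (rels : list (base_relation F)) (q : query) : tp_rel F :=
  match q with
  | QRel i => base_as_rel (nth i rels [])
  | QUnion a b => tp_union N (eval_query N rels a) (eval_query N rels b)
  | QInter a b => tp_inter N (eval_query N rels a) (eval_query N rels b)
  | QMinus a b => tp_minus N (eval_query N rels a) (eval_query N rels b)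
  end.

From Stdlib Require Import Reals List Arith Lia.
Import ListNotations.

(* Every lineage produced by [Q] uses only identifiers of base tuples of the
   relations occurring in [Q], each at most once.  A concatenation function
   merely juxtaposes the identifiers of its two arguments, and the two operands
   of a non-repeating query range over disjoint sets of relations, hence over
   disjoint sets of identifiers.  Time bounds, probabilities, index bounds
   and duplicate-freeness of the inputs play no role. *)

Lemma NoDup_app_disjoint {A} (l1 l2 : list A) x :
  NoDup (l1 ++ l2) -> In x l1 -> In x l2 -> False.
Proof.
  induction l1 as [|y l1 IH]; cbn; intros Hnd H1 H2; [easy|].
  inversion Hnd as [|? ? Hy Hnd']; subst.
  destruct H1 as [<-|H1].
  - apply Hy, in_or_app; auto.
  - eauto.
Qed.

Lemma In_nth_concat {A} (ls : list (list A)) i x :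
  In x (nth i ls []) -> In x (concat ls).
Proof.
  revert i; induction ls as [|l ls IH]; intros [|i]; cbn; try easy;
    intros Hx; apply in_or_app; eauto.
Qed.

Lemma NoDup_concat_nth {A} (ls : list (list A)) i :
  NoDup (concat ls) -> NoDup (nth i ls []).
Proof.
  revert i; induction ls as [|l ls IH]; intros [|i] Hnd; cbn in *.
  - constructor.
  - constructor.
  - exact (NoDup_app_remove_r _ _ Hnd).
  - exact (IH i (NoDup_app_remove_l _ _ Hnd)).
Qed.

Lemma NoDup_concat_nth_disjoint {A} (ls : list (list A)) i j x :
  NoDup (concat ls) -> i <> j ->
  In x (nth i ls []) -> In x (nth j ls []) -> False.
Proof.
  revert i j; induction ls as [|l ls IH]; intros [|i] [|j] Hnd Hij Hi Hj;
    cbn in *; try easy.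
  - exact (NoDup_app_disjoint _ _ _ Hnd Hi (In_nth_concat _ _ _ Hj)).
  - exact (NoDup_app_disjoint _ _ _ Hnd Hj (In_nth_concat _ _ _ Hi)).
  - exact (IH i j (NoDup_app_remove_l _ _ Hnd) ltac:(congruence) Hi Hj).
Qed.

Lemma NoDup_flat_map_nth {A} (ls : list (list A)) (idx : list nat) :
  NoDup (concat ls) -> NoDup idx -> NoDup (flat_map (fun i => nth i ls []) idx).
Proof.
  intros Hls; induction idx as [|i idx IH]; intros Hidx; cbn; [constructor|].
  inversion Hidx as [|? ? Hi Hidx']; subst.
  apply NoDup_app; [exact (NoDup_concat_nth _ _ Hls) | exact (IH Hidx')|].
  intros x Hx (j & Hj & Hx')%in_flat_map.
  apply (NoDup_concat_nth_disjoint ls i j x Hls); auto.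
  intros ->; contradiction.
Qed.

Lemma NoDup_app_incl {A} (l1 l2 m1 m2 : list A) :
  NoDup l1 -> NoDup l2 -> incl l1 m1 -> incl l2 m2 -> NoDup (m1 ++ m2) ->
  NoDup (l1 ++ l2).
Proof.
  intros Hl1 Hl2 Hi1 Hi2 Hm.
  apply NoDup_app; auto.
  intros x Hx1 Hx2; exact (NoDup_app_disjoint _ _ _ Hm (Hi1 _ Hx1) (Hi2 _ Hx2)).
Qed.

Definition opt_ids (o : option lineage) : list nat :=
  match o with Some l => lin_ids l | None => [] end.

Definition concat_ids_additive
    (cc : option lineage -> option lineage -> option lineage) : Prop :=
  forall a b l, cc a b = Some l -> lin_ids l = opt_ids a ++ opt_ids b.

Lemma lc_or_ids_additive : concat_ids_additive lc_or.
Proof.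
  intros [a|] [b|] l H; inversion H; cbn; auto using app_nil_r.
Qed.

Lemma lc_and_ids_additive : concat_ids_additive lc_and.
Proof.
  intros [a|] [b|] l H; inversion H; cbn; auto using app_nil_r.
Qed.

Lemma lc_andNot_ids_additive : concat_ids_additive lc_andNot.
Proof.
  intros [a|] [b|] l H; inversion H; cbn; auto using app_nil_r.
Qed.

Definition one_occurrence_within {F} (r : tp_rel F) (S : list nat) : Prop :=
  forall x, r x -> NoDup (lin_ids (lin x)) /\ incl (lin_ids (lin x)) S.

Lemma lin_at_one_occurrence_within {F} (r : tp_rel F) S f t o :
  one_occurrence_within r S -> lin_at r f t o ->
  NoDup (opt_ids o) /\ incl (opt_ids o) S.
Proof.
  intros Hr; destruct o as [l|]; cbn.
  - intros (y & Hy & _ & _ & <-); exact (Hr y Hy).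
  - intros _; split; [constructor | intros ? []].
Qed.

Lemma tp_setop_one_occurrence_within {F} N nn cc (r s : tp_rel F) S1 S2 :
  one_occurrence_within r S1 -> one_occurrence_within s S2 ->
  NoDup (S1 ++ S2) -> concat_ids_additive cc ->
  one_occurrence_within (tp_setop N nn cc r s) (S1 ++ S2).
Proof.
  intros Hr Hs HS Hcc x (Hlt & _ & Hcover & _).
  (* The interval of [x] is nonempty, so [lin x] is produced by [cc] at [ts x]. *)
  destruct (Hcover (ts x)) as (a & b & Ha & Hb & _ & Hab); [unfold in_T; lia|].
  rewrite (Hcc _ _ _ Hab).
  destruct (lin_at_one_occurrence_within _ _ _ _ _ Hr Ha) as [Hnda Hia].
  destruct (lin_at_one_occurrence_within _ _ _ _ _ Hs Hb) as [Hndb Hib].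
  split; [exact (NoDup_app_incl _ _ _ _ Hnda Hndb Hia Hib HS) | exact (incl_app_app Hia Hib)].
Qed.

Definition query_ids {F} (rels : list (base_relation F)) (q : query) : list nat :=
  flat_map (fun i => nth i (map (map b_id) rels) []) (q_rels q).

Lemma eval_query_one_occurrence_within {F} N (rels : list (base_relation F)) q :
  NoDup (query_ids rels q) ->
  one_occurrence_within (eval_query N rels q) (query_ids rels q).
Proof.
  induction q as [i|q1 IH1 q2 IH2|q1 IH1 q2 IH2|q1 IH1 q2 IH2]; intros Hnd.
  1: {
    intros x (b & Hb & _ & -> & _); cbn.
    split; [repeat constructor; easy|].
    intros z [<-|[]].
    unfold query_ids; cbn; rewrite app_nil_r.
    change [] with (map b_id (@nil (base_tuple F))); rewrite map_nth.
    exact (in_map b_id _ _ Hb).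
  }
  all: unfold query_ids in *; cbn in *; rewrite flat_map_app in *.
  all: apply tp_setop_one_occurrence_within;
         eauto using NoDup_app_remove_l, NoDup_app_remove_r, lc_or_ids_additive,
                     lc_and_ids_additive, lc_andNot_ids_additive.
Qed.

Lemma query_ids_NoDup {F} (rels : list (base_relation F)) q :
  NoDup (map b_id (concat rels)) -> non_repeating q -> NoDup (query_ids rels q).
Proof.
  intros Hids Hq; apply NoDup_flat_map_nth; [rewrite <- concat_map; exact Hids | exact Hq].
Qed.

Theorem theorem1 (F : Type) (N : nat) (rels : list (base_relation F)) (q : query) :
  (* well-formed base tuples (interval in Omega^T = {0..N-1}, p in (0,1]) *)
  (forall r, In r rels -> forall b, In b r -> base_tuple_wf N b) ->
  (* identifiers distinct across all base tuples *)
  NoDup (map b_id (concat rels)) ->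
  (* duplicate-free input relations *)
  (forall r, In r rels -> base_duplicate_free r) ->
  (* Q is a query over r_1..r_m that is non-repeating *)
  (forall i, In i (q_rels q) -> i < length rels) ->
  non_repeating q ->
  forall x, eval_query N rels q x -> one_occurrence_form (lin x).
Proof.
  intros _ Hids _ _ Hq x Hx.
  apply (eval_query_one_occurrence_within N rels q (query_ids_NoDup rels q Hids Hq) x Hx).
Qed.
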